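(* Let $P:(N,h)\to(B,\langle\cdot,\cdot\rangle)$ be a strongly horizontally conformal map. If $k>0$ is an integer with $k+\mathrm{rk}\,P-\dim N\ge 1$, then $P$ is $k$-wide.
   Context: $P$ is strongly horizontally conformal if $P$ is a submersion and there is a smooth $\psi$ with $e^{2\psi}\ge c>0$ and $\langle dP(X),dP(Y)\rangle=e^{2\psi}h(X,Y)$ for all $X,Y$ in the horizontal distribution $(\ker dP)^\perp$. $P$ is $k$-wide if there is a constant $c'>0$ such that $\sum_{i=1}^k\langle dP(w_i),dP(w_i)\rangle\ge c'$ for every orthonormal $k$-frame $w_1,\dots,w_k$ of $TN$. *)

From HB Require Import structures.
From mathcomp Require Import all_boot all_order all_algebra.
From mathcomp Require Import all_classical all_reals all_analysis.
Set Implicit Arguments. Unset Strict Implicit. Unset Printing Implicit Defensive.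
Import Order.TTheory GRing.Theory Num.Theory.
Local Open Scope ring_scope.

(* Pointwise model of a map P : (N,h) -> (B,g) between Riemannian manifolds:
   at each point x : N, the tangent space T_xN is identified with 'rV_n
   (n = dim N) and T_{P x}B with 'rV_m (m = dim B); tangent vectors are
   row vectors, the metric h x (resp. g y) is represented by its symmetric
   positive definite Gram matrix, and dP x : 'M_(n,m) is the differential
   of P at x, acting by v |-> v *m dP x. *)

Definition ip (R : realType) (d : nat) (G : 'M[R]_d) (u v : 'rV[R]_d) : R :=
  (u *m G *m v^T) ord0 ord0.

Definition metric_mx (R : realType) (d : nat) (G : 'M[R]_d) : Prop :=
  G^T = G /\ forall v : 'rV[R]_d, v != 0 -> 0 < ip G v v.

Definition horizontal (R : realType) (n m : nat) (h : 'M[R]_n) (L : 'M[R]_(n, m))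
  (v : 'rV[R]_n) : Prop :=
  forall u : 'rV[R]_n, u *m L = 0 -> ip h u v = 0.

Definition strongly_horizontally_conformal (R : realType) (N B : Type) (n m : nat)
  (P : N -> B) (dP : N -> 'M[R]_(n, m)) (h : N -> 'M[R]_n) (g : B -> 'M[R]_m) : Prop :=
  (forall x, \rank (dP x) = m) /\
  exists psi : N -> R, exists c : R, 0 < c /\
    (forall x, c <= expR (2 * psi x)) /\
    (forall x (X Y : 'rV[R]_n), horizontal (h x) (dP x) X -> horizontal (h x) (dP x) Y ->
       ip (g (P x)) (X *m dP x) (Y *m dP x) = expR (2 * psi x) * ip (h x) X Y).

Definition orthonormal_frame (R : realType) (n k : nat) (hx : 'M[R]_n)
  (w : 'I_k -> 'rV[R]_n) : Prop :=
  forall i j : 'I_k, ip hx (w i) (w j) = (i == j)%:R.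

Definition k_wide (R : realType) (N B : Type) (n m : nat) (k : nat)
  (P : N -> B) (dP : N -> 'M[R]_(n, m)) (h : N -> 'M[R]_n) (g : B -> 'M[R]_m) : Prop :=
  exists c' : R, 0 < c' /\
    forall x (w : 'I_k -> 'rV[R]_n), orthonormal_frame (h x) w ->
      c' <= \sum_(i < k) ip (g (P x)) (w i *m dP x) (w i *m dP x).

From HB Require Import structures.
From mathcomp Require Import all_boot all_order all_algebra.
From mathcomp Require Import all_classical all_reals all_analysis.
From mathcomp Require Import lra zify.
Import Order.TTheory GRing.Theory Num.Theory.
Local Open Scope ring_scope.
Set Implicit Arguments. Unset Strict Implicit. Unset Printing Implicit Defensive.

(* Fix x and let H = (ker dP_x)^perp be the horizontal space, of dimension
   rk P. Since k + rk P > dim N, the span of an orthonormal frame w_1..w_k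
   meets H in some u = sum_i x_i w_i <> 0, and |u|^2 = |x|^2. Let pi be the
   projection onto H along ker dP_x. Then dP(w_i) = dP(pi w_i), so conformality
   gives sum_i |dP w_i|^2 = e^(2 psi) sum_i |pi w_i|^2, while u = pi u =
   sum_i x_i pi w_i and Cauchy--Schwarz give |u|^2 <= |x|^2 sum_i |pi w_i|^2.
   Hence the sum is at least e^(2 psi) >= c. *)

Section GramMatrix.
Variables (R : realType) (n : nat) (h : 'M[R]_n).

Lemma ip_entry p q (A : 'M[R]_(p, n)) (C : 'M[R]_(q, n)) i j :
  (A *m h *m C^T) i j = ip h (row i A) (row j C).
Proof. by rewrite /ip tr_row -!row_mul colE mulmxA -colE !mxE. Qed.

Lemma mxtrace_ip (u v : 'rV[R]_n) : \tr (u *m h *m v^T) = ip h u v.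
Proof. by rewrite /mxtrace big_ord1. Qed.

Lemma mxtrace_gram p (A : 'M[R]_(p, n)) :
  \tr (A *m h *m A^T) = \sum_i ip h (row i A) (row i A).
Proof. by apply: eq_bigr => i _; rewrite ip_entry. Qed.

Lemma sub_orthomx p q (A : 'M[R]_(p, n)) (C : 'M[R]_(q, n)) :
  (C <= orthomx idfun h A)%MS = (C *m h *m A^T == 0).
Proof. by rewrite sub_kermx map_mx_id // mulmxA. Qed.

Hypothesis hmet : metric_mx h.

Lemma ip_sym u v : ip h u v = ip h v u.
Proof.
rewrite /ip -[in LHS](trmxK (u *m h *m v^T)) [LHS]mxE.
by rewrite !trmx_mul trmxK hmet.1 mulmxA.
Qed.

Lemma ip_ge0 v : 0 <= ip h v v.
Proof.
have [->|v0] := eqVneq v 0; last exact/ltW/hmet.2.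
by rewrite /ip !mul0mx mxE.
Qed.

Lemma ip_eq0 v : (ip h v v == 0) = (v == 0).
Proof.
have [->|v0] := eqVneq v 0; first by rewrite /ip !mul0mx mxE eqxx.
by rewrite gt_eqF // hmet.2.
Qed.

Lemma metric_row_full : row_full h.
Proof.
rewrite row_full_unit -row_free_unit -kermx_eq0; apply/rowV0P => v /sub_kermxP vh0.
by apply/eqP; rewrite -ip_eq0 /ip vh0 mul0mx mxE.
Qed.

Lemma capmx_orthomx p (A : 'M[R]_(p, n)) : (A :&: orthomx idfun h A = 0)%MS.
Proof.
apply/eqP/rowV0P => v; rewrite sub_capmx sub_orthomx => /andP[/submxP[y vE] /eqP vhA0].
by apply/eqP; rewrite -ip_eq0 /ip {2}vE trmx_mul !mulmxA vhA0 mul0mx mxE.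
Qed.

Lemma mxrank_orthomx p (A : 'M[R]_(p, n)) :
  \rank (orthomx idfun h A) = (n - \rank A)%N.
Proof.
by rewrite mxrank_ker map_mx_id // (eqmxMfull _ metric_row_full) mxrank_tr.
Qed.

Lemma orthomx_addsmx_full p (A : 'M[R]_(p, n)) : row_full (orthomx idfun h A + A)%MS.
Proof.
rewrite /row_full mxrank_disjoint_sum; last by rewrite capmxC capmx_orthomx.
by rewrite mxrank_orthomx subnK // rank_leq_col.
Qed.

End GramMatrix.

Lemma metric_mx1 (R : realType) (n : nat) : metric_mx (1%:M : 'M[R]_n).
Proof.
split=> [|v v0]; first exact: trmx1.
rewrite /ip mulmx1 mxE (eq_bigr (fun j => v 0 j ^+ 2)) => [|j _]; last first.
  by rewrite mxE expr2.
rewrite lt_def sumr_ge0 ?andbT // => [|j _]; last exact: sqr_ge0.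
apply: contra v0 => /eqP/psumr_eq0P sq_eq0; apply/eqP/rowP => j.
by apply/eqP; rewrite !mxE -sqrf_eq0 sq_eq0 // => i _; apply: sqr_ge0.
Qed.

Lemma ip_mulmx_le (R : realType) (n p : nat) (h : 'M[R]_n)
    (x : 'rV[R]_p) (B : 'M[R]_(p, n)) : metric_mx h ->
  ip h (x *m B) (x *m B) <= ip 1%:M x x * \sum_i ip h (row i B) (row i B).
Proof.
move=> hmet; set u := x *m B; set s := ip h u u; set q := ip 1%:M x x.
rewrite -mxtrace_gram; set T := \tr _.
have := ip_ge0 (metric_mx1 R p) x; rewrite le_eqVlt -/q => /predU1P[q0|q_gt0].
  have /eqP x0 : x == 0 by rewrite -(ip_eq0 (metric_mx1 R p)) -/q -q0.
  by rewrite /s /u -q0 x0 mul0mx mul0r /ip !mul0mx mxE.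
have uhu : u *m h *m u^T = s%:M by rewrite [LHS]mx11_scalar.
have t1 : \tr (B *m h *m (u^T *m x)) = s.
  by rewrite mulmxA mxtrace_mulC !mulmxA mxtrace_ip.
have t2 : \tr (x^T *m u *m h *m B^T) = s.
  by rewrite -mxtrace_tr !trmx_mul !trmxK hmet.1 -t1 /u trmx_mul !mulmxA.
have t3 : \tr (x^T *m u *m h *m (u^T *m x)) = s * q.
  rewrite -!mulmxA mxtrace_mulC !mulmxA uhu mul_scalar_mx -scalemxAl mxtraceZ.
  by rewrite /q -mxtrace_ip mulmx1.
(* Expanding 0 <= tr (D h D^T) yields q * (q * T - s) >= 0. *)
set D := q *: B - x^T *m u.
have : 0 <= \tr (D *m h *m D^T) by rewrite mxtrace_gram sumr_ge0 // => i _; apply: ip_ge0.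
rewrite /D linearB linearZ /= trmx_mul trmxK.
rewrite !(mulmxBl, mulmxBr) -!scalemxAl -!scalemxAr !raddfB /= !mxtraceZ t1 t2 t3.
nra.
Qed.

Lemma capmx_neq0 (R : fieldType) (n p q : nat) (A : 'M[R]_(p, n)) (C : 'M[R]_(q, n)) :
  (n < \rank A + \rank C)%N -> (A :&: C)%MS != 0.
Proof.
rewrite -mxrank_eq0 -lt0n; have := mxrank_sum_cap A C.
by have := rank_leq_col (A + C)%MS; lia.
Qed.

Section OrthonormalFrame.
Variables (R : realType) (n k : nat) (h : 'M[R]_n) (w : 'I_k -> 'rV[R]_n).
Hypothesis orth : orthonormal_frame h w.
Local Notation W := (\matrix_i w i).

Lemma orthonormal_gram : W *m h *m W^T = 1%:M.
Proof. by apply/matrixP => i j; rewrite ip_entry !rowK orth mxE. Qed.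

Lemma orthonormal_ip_mul x : ip h (x *m W) (x *m W) = ip 1%:M x x.
Proof. by rewrite /ip trmx_mul -orthonormal_gram !mulmxA. Qed.

Lemma orthonormal_row_free : row_free W.
Proof.
rewrite -kermx_eq0; apply/rowV0P => v /sub_kermxP vW0.
by rewrite -[v]mulmx1 -orthonormal_gram !mulmxA vW0 !mul0mx.
Qed.

End OrthonormalFrame.

Section HorizontalSpace.
Variables (R : realType) (n m : nat) (h : 'M[R]_n) (L : 'M[R]_(n, m)).
Hypothesis hmet : metric_mx h.
Local Notation H := (orthomx idfun h (kermx L)).
Local Notation pi_H := (proj_mx H (kermx L)).

Lemma orthomx_ker_horizontal v : (v <= H)%MS -> horizontal h L v.
Proof.
rewrite sub_orthomx => /eqP vhK0 u /eqP; rewrite -sub_kermx => /submxP[y ->].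
by rewrite ip_sym // /ip trmx_mul mulmxA vhK0 mul0mx mxE.
Qed.

Lemma mxrank_orthomx_ker : \rank H = \rank L.
Proof. by rewrite mxrank_orthomx // mxrank_ker subKn // rank_leq_row. Qed.

Lemma proj_orthomx_ker_mul p (V : 'M[R]_(p, n)) : V *m pi_H *m L = V *m L.
Proof.
have /proj_mx_compl_sub : (V <= H + kermx L)%MS by apply/submx_full/orthomx_addsmx_full.
by rewrite sub_kermx mulmxBl subr_eq0 => /eqP.
Qed.

Lemma orthonormal_proj_orthomx_ker_ge1 k (w : 'I_k -> 'rV[R]_n) :
  orthonormal_frame h w -> (n < k + \rank L)%N ->
  1 <= \sum_i ip h (w i *m pi_H) (w i *m pi_H).
Proof.
move=> orth rank_gt.
have /rowV0Pn[u] : ((\matrix_i w i) :&: H)%MS != 0.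
  by apply: capmx_neq0; rewrite mxrank_orthomx_ker (eqP (orthonormal_row_free orth)).
rewrite sub_capmx => /andP[/submxP[x ->] xWH] xW0.
have := ip_mulmx_le x (\matrix_i w i *m pi_H) hmet.
rewrite mulmxA proj_mx_id //; last by rewrite capmxC capmx_orthomx.
under eq_bigr do rewrite row_mul rowK.
by rewrite orthonormal_ip_mul // ler_pMr // -(orthonormal_ip_mul orth) hmet.2.
Qed.

Lemma conformal_orthonormal_sum_ge (G : 'M[R]_m) (lambda : R) k (w : 'I_k -> 'rV[R]_n) :
  orthonormal_frame h w -> (n < k + \rank L)%N -> 0 <= lambda ->
  (forall X Y, horizontal h L X -> horizontal h L Y ->
     ip G (X *m L) (Y *m L) = lambda * ip h X Y) ->
  lambda <= \sum_i ip G (w i *m L) (w i *m L).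
Proof.
move=> orth rank_gt lambda_ge0 conf.
have termE i : ip G (w i *m L) (w i *m L) =
    lambda * ip h (w i *m pi_H) (w i *m pi_H).
  by rewrite -proj_orthomx_ker_mul conf //; apply/orthomx_ker_horizontal/proj_mx_sub.
rewrite (eq_bigr _ (fun i _ => termE i)) -mulr_sumr -[X in X <= _]mulr1.
by rewrite ler_wpM2l // orthonormal_proj_orthomx_ker_ge1.
Qed.

End HorizontalSpace.

Theorem mainTheorem15 (R : realType) (N B : Type) (n m : nat)
  (P : N -> B) (dP : N -> 'M[R]_(n, m)) (h : N -> 'M[R]_n) (g : B -> 'M[R]_m)
  (hmet : forall x, metric_mx (h x)) (gmet : forall y, metric_mx (g y))
  (k : nat) (rkP : nat) (hrk : forall x, \rank (dP x) = rkP) :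
  strongly_horizontally_conformal P dP h g ->
  (0 < k)%N ->
  (1 <= (k%:Z + rkP%:Z - n%:Z))%R ->
  k_wide k P dP h g.
Proof.
move=> [_ [psi [c [c_gt0 [c_le conf]]]]] _ rank_sum.
exists c; split=> // x w orth.
have rank_gt : (n < k + \rank (dP x))%N by move: rank_sum; rewrite hrk; lia.
apply: le_trans (c_le x) _.
apply: (conformal_orthonormal_sum_ge (hmet x) orth rank_gt); last exact: conf.
exact/ltW/expR_gt0.
Qed.
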